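(* Consider two bosonic modes with quadratures $(\hat q_1,\hat p_1,\hat q_2,\hat p_2)$, subsystem $A$ = mode 1, $B$ = mode 2, and the Hamiltonian $\hat H=\frac12(\hat p_1\hat q_2+\hat q_2\hat p_1)$, whose symplectic evolution is $$M(t)=\begin{pmatrix}1&0&t&0\\0&1&0&0\\0&0&1&0\\0&-t&0&1\end{pmatrix}.$$ Then for every $t\ge0$, $$\inf_{\sigma\ \mathrm{Gaussian}}\Big(I(A;B)(\sigma)+I(A;B)(\mathcal U_{M(t)}(\sigma))\Big)\ \le\ 2\ln\frac e2,$$ the infimum being over all Gaussian states $\sigma$ of $AB$.
   Context: Quadratures satisfy $[\hat\xi^a,\hat\xi^b]=i\Omega_4^{ab}$ with $\Omega_4=\bigoplus_{i=1}^2\begin{pmatrix}0&1\\-1&0\end{pmatrix}$. Gaussian states are those fully characterized by displacement and covariance matrix $G^{ab}=\mathrm{Tr}[\hat\xi^a\sigma\hat\xi^b+\hat\xi^b\sigma\hat\xi^a]-2z^az^b$. $\mathcal U_M(\sigma)=U_M\sigma U_M^\dagger$ with $U_M^\dagger\hat\xi^aU_M=\sum_bM^a{}_b\hat\xi^b$, so the covariance matrix transforms as $G\mapsto MGM^\intercal$. $I(A;B)=S(A)+S(B)-S(AB)$ with von Neumann entropies. *)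

From HB Require Import structures.
From mathcomp Require Import all_boot all_order all_algebra.
From mathcomp Require Import all_classical all_reals all_analysis.
From mathcomp Require Import complex.

Set Implicit Arguments.
Unset Strict Implicit.
Unset Printing Implicit Defensive.

Import Order.TTheory GRing.Theory Num.Theory.
Local Open Scope ring_scope.
Local Open Scope classical_set_scope.

Section Gaussian.
Variable R : realType.

Definition Omega2 : 'M[R]_2 :=
  \matrix_(i < 2, j < 2)
    (if (i == 0%N :> nat) && (j == 1%N :> nat) then 1
     else if (i == 1%N :> nat) && (j == 0%N :> nat) then -1 else 0).

(* Omega_4 = Omega2 (+) Omega2, quadrature order (q1,p1,q2,p2) *)
Definition Omega4 : 'M[R]_4 := block_mx Omega2 0 0 Omega2.

Definition Mt (t : R) : 'M[R]_4 :=
  \matrix_(i < 4, j < 4)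
    (if i == j then 1
     else if (i == 0%N :> nat) && (j == 2%N :> nat) then t
     else if (i == 3%N :> nat) && (j == 1%N :> nat) then - t else 0).

Definition cplx_mx m n (A : 'M[R]_(m, n)) : 'M[R[i]]_(m, n) :=
  map_mx (fun x => x%:C%C) A.

Definition psd_cplx n (H : 'M[R[i]]_n) : Prop :=
  forall v : 'cV[R[i]]_n, 0 <= ((map_mx conjc v)^T *m H *m v) 0 0.

(* Covariance matrices of (two-mode) Gaussian states:
   G real symmetric and G + i Omega_4 >= 0 (uncertainty principle). *)
Definition gaussian_cov (G : 'M[R]_4) : Prop :=
  G^T = G /\ psd_cplx (cplx_mx G + (Complex 0 1) *: cplx_mx Omega4).

(* Entropy contribution of a symplectic eigenvalue nu (vacuum has G = I, nu = 1):
   g(nu) = (nu+1)/2 ln((nu+1)/2) - (nu-1)/2 ln((nu-1)/2). *)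
Definition gfun (nu : R) : R :=
  (nu + 1) / 2 * ln ((nu + 1) / 2) - (nu - 1) / 2 * ln ((nu - 1) / 2).

(* nu is the symplectic spectrum of G w.r.t. the symplectic form Om:
   the eigenvalues of Om G are exactly +/- i nu_k, i.e.
   char_poly (Om G) = prod_k (X^2 + nu_k^2), with nu_k >= 0. *)
Definition symp_spec n (Om G : 'M[R]_n) (nu : seq R) : Prop :=
  all (fun x => 0 <= x) nu /\
  char_poly (Om *m G) = \prod_(x <- nu) ('X^2 + (x ^+ 2)%:P).

(* von Neumann entropy of a Gaussian state with covariance matrix G:
   S = sum_k g(nu_k) over the symplectic eigenvalues. *)
Definition gauss_entropy n (Om G : 'M[R]_n) : R :=
  xget 0 [set s | exists nu, symp_spec Om G nu /\ s = \sum_(x <- nu) gfun x].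

Definition covA (G : 'M[R]_4) : 'M[R]_2 := @ulsubmx R 2 2 2 2 G.
Definition covB (G : 'M[R]_4) : 'M[R]_2 := @drsubmx R 2 2 2 2 G.

Definition mutual_info (G : 'M[R]_4) : R :=
  gauss_entropy Omega2 (covA G) + gauss_entropy Omega2 (covB G)
  - gauss_entropy Omega4 G.

End Gaussian.

(* Take the Gaussian state G = T T^T, where T = M(-t/2) S(e) and S(e) squeezes
   mode B by e.  Since T is symplectic, G is pure: Omega G is similar to Omega,
   so its symplectic spectrum is {1, 1} and S(AB) = 0.  The evolved state
   M(t) G M(t)^T = T' T'^T with T' = M(t/2) S(e) is pure for the same reason,
   and for both states each reduced covariance matrix has determinant
   1 + (t e / 2)^2.  Hence the sum of the two mutual informations is
   4 g(nu) with nu = sqrt (1 + (t e / 2)^2), which tends to g(1) = 0 as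
   t e -> 0; nu = 257/255 already gives a value below 2 ln (e / 2). *)

From HB Require Import structures.
From mathcomp Require Import all_boot all_order all_algebra.
From mathcomp Require Import all_classical all_reals all_analysis.
From mathcomp Require Import complex.
From mathcomp Require Import ring lra.
Import Order.TTheory GRing.Theory Num.Theory.
Local Open Scope ring_scope.
Local Open Scope classical_set_scope.

Set Implicit Arguments.
Unset Strict Implicit.
Unset Printing Implicit Defensive.

Lemma block_mxP (T : Type) m1 m2 n1 n2 (M : 'M[T]_(m1 + m2, n1 + n2))
    (A : 'M[T]_(m1, n1)) (B : 'M[T]_(m1, n2))
    (C : 'M[T]_(m2, n1)) (D : 'M[T]_(m2, n2)) :
  (forall i j, M (lshift m2 i) (lshift n2 j) = A i j) ->
  (forall i j, M (lshift m2 i) (rshift n1 j) = B i j) ->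
  (forall i j, M (rshift m1 i) (lshift n2 j) = C i j) ->
  (forall i j, M (rshift m1 i) (rshift n1 j) = D i j) ->
  M = block_mx A B C D.
Proof.
move=> MA MB MC MD; rewrite -[M]submxK.
by f_equal; apply/matrixP => i j; rewrite !mxE.
Qed.

Lemma det_mx22 (R : comNzRingType) (A : 'M[R]_2) :
  \det A = A 0 0 * A 1 1 - A 0 1 * A 1 0.
Proof.
rewrite (expand_det_row _ 0) !big_ord_recl big_ord0 /cofactor !det_mx11 !mxE /=.
rewrite expr0 expr1 mul1r mulN1r addr0 mulrN.
by congr (A _ _ * A _ _ - A _ _ * A _ _); apply/val_inj.
Qed.

Lemma char_poly_mx22 (R : comNzRingType) (A : 'M[R]_2) :
  char_poly A = 'X^2 - (\tr A)%:P * 'X + (\det A)%:P.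
Proof.
rewrite /char_poly det_mx22 det_mx22 /char_poly_mx /mxtrace.
rewrite !big_ord_recl big_ord0 !mxE /= !mulr1n !mulr0n.
have -> : lift ord0 ord0 = 1 :> 'I_2 by apply/val_inj.
rewrite addr0; ring.
Qed.

Lemma char_poly_block_diag (R : comNzRingType) n1 n2
    (A : 'M[R]_n1) (D : 'M[R]_n2) :
  char_poly (block_mx A 0 0 D) = char_poly A * char_poly D.
Proof.
rewrite /char_poly /char_poly_mx scalar_mx_block map_block_mx !raddf0.
by rewrite opp_block_mx add_block_mx !oppr0 !addr0 det_ublock.
Qed.

Section CharPolyConj.
Variable R : comUnitRingType.

Lemma char_poly_conj n (P A : 'M[R]_n) :
  P \in unitmx -> char_poly (P *m A *m invmx P) = char_poly A.
Proof.
move=> uP; rewrite /char_poly.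
have -> : char_poly_mx (P *m A *m invmx P) =
    map_mx polyC P *m char_poly_mx A *m map_mx polyC (invmx P).
  rewrite /char_poly_mx mulmxBr mulmxBl -!map_mxM mul_mx_scalar -scalemxAl.
  by rewrite -map_mxM mulmxV // map_mx1 scalemx1.
by rewrite !det_mulmx mulrAC -det_mulmx -map_mxM mulmxV // map_mx1 det1 mul1r.
Qed.

Lemma char_poly_mulmxC n (A B : 'M[R]_n) :
  A \in unitmx -> char_poly (A *m B) = char_poly (B *m A).
Proof.
move=> uA; have -> : A *m B = A *m (B *m A) *m invmx A by rewrite !mulmxA mulmxK.
exact: char_poly_conj.
Qed.

End CharPolyConj.

Section Symplectic.
Variables (R : comUnitRingType) (n : nat) (Om : 'M[R]_n).
Hypothesis Om_sqr : Om *m Om = - 1%:M.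

Definition symplectic (T : 'M[R]_n) := T *m Om *m T^T = Om.

Lemma unitmx_symplectic_form : Om \in unitmx.
Proof. by case: (@mulmx1_unit _ _ Om (- Om)); rewrite ?mulmxN ?Om_sqr ?opprK. Qed.

Lemma symplectic_right_inverse T :
  symplectic T -> T *m - (Om *m T^T *m Om) = 1%:M.
Proof. by move=> sT; rewrite mulmxN !mulmxA sT Om_sqr opprK. Qed.

Lemma symplectic_unitmx T : symplectic T -> T \in unitmx.
Proof. by move=> /symplectic_right_inverse /mulmx1_unit []. Qed.

Lemma symplectic_trmx T : symplectic T -> T^T *m Om *m T = Om.
Proof.
move=> /symplectic_right_inverse /mulmx1C; rewrite mulNmx => inv.
have : Om *m (Om *m T^T *m Om *m T) = - (T^T *m Om *m T).
  by rewrite !mulmxA Om_sqr !mulNmx !mul1mx.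
by rewrite -[_ *m T]opprK inv mulmxN mulmx1 => /oppr_inj.
Qed.

Lemma symplecticM S T : symplectic S -> symplectic T -> symplectic (S *m T).
Proof.
by move=> sS sT; rewrite /symplectic trmx_mul mulmxA -(mulmxA S T) -(mulmxA S) sT.
Qed.

Lemma char_poly_symplectic_gram T :
  symplectic T -> char_poly (Om *m (T *m T^T)) = char_poly Om.
Proof.
move=> sT; rewrite char_poly_mulmxC ?unitmx_symplectic_form // -mulmxA.
by rewrite char_poly_mulmxC ?symplectic_unitmx // symplectic_trmx.
Qed.

End Symplectic.

Section SymplecticForms.
Variable R : realType.

Lemma Omega2_sqr : Omega2 R *m Omega2 R = - 1%:M.
Proof.
apply/matrixP => i j; rewrite !mxE !big_ord_recl big_ord0 !mxE /=.
by case: i => -[|[|//]] ?; case: j => -[|[|//]] ? /=; ring.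
Qed.

Lemma Omega4E : Omega4 R = \matrix_(i < 4, j < 4)
  match i : nat, j : nat with 0, 1 | 2, 3 => 1 | 1, 0 | 3, 2 => -1 | _, _ => 0 end.
Proof.
by symmetry; apply: (@block_mxP _ 2 2 2 2) => -[[|[|//]] ?] -[[|[|//]] ?]; rewrite !mxE.
Qed.

Lemma Omega4_sqr : Omega4 R *m Omega4 R = - 1%:M.
Proof.
change (block_mx (Omega2 R) 0 0 (Omega2 R) *m block_mx (Omega2 R) 0 0 (Omega2 R)
  = - 1%:M :> 'M[R]_(2 + 2)).
rewrite mulmx_block !mulmx0 !mul0mx !addr0 !add0r Omega2_sqr.
by rewrite (scalar_mx_block 2 2 1) opp_block_mx !oppr0.
Qed.

Lemma char_poly_Omega2_mul (A : 'M[R]_2) :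
  A^T = A -> char_poly (Omega2 R *m A) = 'X^2 + (\det A)%:P.
Proof.
move=> symA; have A10 : A 1 0 = A 0 1 by rewrite -[in LHS]symA mxE.
rewrite char_poly_mx22 det_mulmx det_mx22 /mxtrace.
rewrite !big_ord_recl !big_ord0 !mxE !big_ord_recl !big_ord0 !mxE /=.
have -> : lift ord0 ord0 = 1 :> 'I_2 by apply/val_inj.
by rewrite A10 !mul0r !mul1r !add0r !addr0 mulN1r subrr mul0r subr0 opprK mul1r.
Qed.

Lemma char_poly_Omega4 : char_poly (Omega4 R) = ('X^2 + 1) ^+ 2.
Proof.
have char_Omega2 : char_poly (Omega2 R) = 'X^2 + 1.
  by rewrite -(mulmx1 (Omega2 R)) char_poly_Omega2_mul ?trmx1 // det1.
by have := char_poly_block_diag (Omega2 R) (Omega2 R); rewrite char_Omega2 -expr2.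
Qed.

End SymplecticForms.

Section Entropy.
Variable R : realType.

Lemma size_prod_XaddC2 (nu : seq R) :
  size (\prod_(x <- nu) ('X^2 + (x ^+ 2)%:P)) = (2 * size nu).+1.
Proof.
elim: nu => [|x nu IH]; first by rewrite big_nil size_poly1.
have monic_prod_XaddC2 : \prod_(y <- nu) ('X^2 + (y ^+ 2)%:P) \is monic.
  by apply: monic_prod => y _; exact: monicXnaddC.
rewrite big_cons size_monicM ?monicXnaddC ?monic_neq0 // size_XnaddC // IH.
by rewrite /= mulnS.
Qed.

Lemma size_symp_spec n (Om G : 'M[R]_n) nu :
  symp_spec Om G nu -> (2 * size nu)%N = n.
Proof.
case=> _ /(congr1 (fun p : {poly R} => size p)).
by rewrite size_char_poly size_prod_XaddC2 => -[].
Qed.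

Lemma gauss_entropyE n (Om G : 'M[R]_n) nu :
  symp_spec Om G nu -> (forall mu, symp_spec Om G mu -> mu = nu) ->
  gauss_entropy Om G = \sum_(x <- nu) gfun x.
Proof.
move=> spec_nu uniq_nu; apply: xget_unique; first by exists nu.
by move=> _ [mu [/uniq_nu -> ->]].
Qed.

Lemma gfun1 : gfun (1 : R) = 0.
Proof. by rewrite /gfun subrr mul0r mul0r subr0 divff ?pnatr_eq0 // ln1 mulr0. Qed.

Lemma gauss_entropy_Omega2 (A : 'M[R]_2) : A^T = A -> 0 <= \det A ->
  gauss_entropy (Omega2 R) A = gfun (Num.sqrt (\det A)).
Proof.
move=> symA detA_ge0.
have spec_sqrt : symp_spec (Omega2 R) A [:: Num.sqrt (\det A)].
  by split; rewrite /= ?sqrtr_ge0 // big_seq1 sqr_sqrtr // char_poly_Omega2_mul.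
rewrite (gauss_entropyE spec_sqrt) ?big_seq1 // => mu spec_mu.
have size_mu : size mu == 1%N.
  by rewrite -(eqn_pmul2l (isT : 0 < 2)%N) (size_symp_spec spec_mu).
case: mu spec_mu size_mu => [|x [|//]] // [/= /andP[x_ge0 _]].
rewrite big_seq1 char_poly_Omega2_mul // => /(congr1 (fun p : {poly R} => p`_0)).
by rewrite !coefD !coefXn !coefC /= !add0r => -> _; rewrite sqrtr_sqr ger0_norm.
Qed.

Lemma sqr_XaddC2_eq (a b : R) : 0 <= a -> 0 <= b ->
  ('X^2 + (a ^+ 2)%:P) * ('X^2 + (b ^+ 2)%:P) = ('X^2 + 1) ^+ 2 -> a = 1 /\ b = 1.
Proof.
move=> a_ge0 b_ge0 eq_ab.
have := congr1 (horner^~ 0) eq_ab; have := congr1 (horner^~ 1) eq_ab.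
rewrite /= !hornerE /= => at1 at0.
have a2 : a ^+ 2 = 1 by nra.
by split; nra.
Qed.

Lemma gauss_entropy_symplectic_gram T : symplectic (Omega4 R) T ->
  gauss_entropy (Omega4 R) (T *m T^T) = 0.
Proof.
move=> sT; have := char_poly_symplectic_gram (Omega4_sqr R) sT.
rewrite char_poly_Omega4 => char_TT.
have spec11 : symp_spec (Omega4 R) (T *m T^T) [:: 1; 1].
  by split; rewrite /= ?ler01 // char_TT !big_cons big_nil mulr1 expr1n.
rewrite (gauss_entropyE spec11) => [|mu spec_mu].
  by rewrite !big_cons big_nil gfun1 !addr0.
have size_mu : size mu == 2%N.
  by rewrite -(eqn_pmul2l (isT : 0 < 2)%N) (size_symp_spec spec_mu).
case: mu spec_mu size_mu => [|a [|b [|//]]] // [/= /and3P[a_ge0 b_ge0 _]].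
rewrite char_TT !big_cons big_nil mulr1.
by move=> /esym /(sqr_XaddC2_eq a_ge0 b_ge0) [-> ->].
Qed.

End Entropy.

Section Positivity.
Variable R : realType.

Lemma psd_cplxD n (H1 H2 : 'M[R[i]]_n) :
  psd_cplx H1 -> psd_cplx H2 -> psd_cplx (H1 + H2).
Proof. by move=> psd1 psd2 v; rewrite mulmxDr mulmxDl mxE addr_ge0. Qed.

Lemma psd_cplx_gram n (w : 'cV[R[i]]_n) : psd_cplx (w *m (map_mx conjc w)^T).
Proof.
move=> v; set x := (map_mx conjc v)^T *m w.
have conjK : map_mx conjc (map_mx conjc v) = v.
  by apply/matrixP => i j; rewrite !mxE conjcK.
have -> : (map_mx conjc v)^T *m (w *m (map_mx conjc w)^T) *m v =
    x *m (map_mx conjc x)^T.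
  by rewrite /x map_mxM -map_trmx conjK trmx_mul trmxK !mulmxA.
by clearbody x; rewrite mxE big_ord1 !mxE mulcJ_ge0.
Qed.

Lemma psd_cplx_congr n (P : 'M[R]_n) (H : 'M[R[i]]_n) :
  psd_cplx H -> psd_cplx (cplx_mx P *m H *m cplx_mx P^T).
Proof.
move=> psdH v; have := psdH (cplx_mx P^T *m v).
have conj_real : map_mx conjc (cplx_mx P^T) = cplx_mx P^T.
  by apply/matrixP => i j; rewrite !mxE conjc_real.
have tr_real : (cplx_mx P^T)^T = cplx_mx P by rewrite /cplx_mx map_trmx trmxK.
by rewrite map_mxM conj_real trmx_mul tr_real !mulmxA.
Qed.

Lemma psd_cplx_vacuum :
  psd_cplx (cplx_mx 1%:M + Complex 0 1 *: cplx_mx (Omega4 R)).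
Proof.
pose w (k : nat) : 'cV[R[i]]_4 :=
  \col_j (if j == k :> nat then 1 else if j == k.+1 :> nat then - 'i%C else 0).
have -> : cplx_mx 1%:M + Complex 0 1 *: cplx_mx (Omega4 R) =
    w 0%N *m (map_mx conjc (w 0%N))^T + w 2%N *m (map_mx conjc (w 2%N))^T.
  rewrite Omega4E; apply/matrixP => j k; rewrite !mxE !big_ord1 !mxE.
  by case: j => -[|[|[|[|//]]]] ?; case: k => -[|[|[|[|//]]]] ? /=; simpc.
by apply: psd_cplxD; apply: psd_cplx_gram.
Qed.

Lemma gaussian_cov_symplectic_gram T :
  symplectic (Omega4 R) T -> gaussian_cov (T *m T^T).
Proof.
move=> sT; split; first by rewrite trmx_mul trmxK.
have -> : cplx_mx (T *m T^T) + Complex 0 1 *: cplx_mx (Omega4 R) =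
    cplx_mx T *m (cplx_mx 1%:M + Complex 0 1 *: cplx_mx (Omega4 R)) *m cplx_mx T^T.
  by rewrite mulmxDr mulmxDl -scalemxAr -scalemxAl /cplx_mx -!map_mxM mulmx1 sT.
exact/psd_cplx_congr/psd_cplx_vacuum.
Qed.

End Positivity.

Section SqueezedStates.
Variable R : realType.

Ltac entrywise4 := apply/matrixP => -[[|[|[|[|?]]]] ?] -[[|[|[|[|?]]]] ?] //;
  repeat rewrite ?mxE ?big_ord_recl ?big_ord0 /=.

Definition squeeze (e : R) : 'M[R]_4 := \matrix_(i < 4, j < 4)
  if i == j then match i : nat with 2 => e | 3 => e^-1 | _ => 1 end else 0.

Definition evolved_squeezed_cov (u e : R) : 'M[R]_4 :=
  (Mt u *m squeeze e) *m (Mt u *m squeeze e)^T.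

Lemma MtD (a b : R) : Mt a *m Mt b = Mt (a + b).
Proof. by entrywise4; ring. Qed.

Lemma Mt_symplectic (t : R) : symplectic (Omega4 R) (Mt t).
Proof. by rewrite /symplectic Omega4E; entrywise4; ring. Qed.

Lemma squeeze_symplectic e : e != 0 -> symplectic (Omega4 R) (squeeze e).
Proof. by move=> e_neq0; rewrite /symplectic Omega4E; entrywise4; field. Qed.

Lemma symplectic_Mt_squeeze (u e : R) :
  e != 0 -> symplectic (Omega4 R) (Mt u *m squeeze e).
Proof.
by move=> e_neq0; apply: symplecticM; [exact: Mt_symplectic | exact: squeeze_symplectic].
Qed.

Lemma Mt_evolved_squeezed_cov (t u e : R) :
  Mt t *m evolved_squeezed_cov u e *m (Mt t)^T = evolved_squeezed_cov (t + u) e.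
Proof. by rewrite /evolved_squeezed_cov -MtD !trmx_mul !mulmxA. Qed.

Lemma det_covA_evolved_squeezed (u e : R) :
  \det (covA (evolved_squeezed_cov u e)) = 1 + (u * e) ^+ 2.
Proof.
rewrite det_mx22 /covA.
by repeat rewrite ?mxE ?big_ord_recl ?big_ord0 /=; ring.
Qed.

Lemma det_covB_evolved_squeezed (u e : R) : e != 0 ->
  \det (covB (evolved_squeezed_cov u e)) = 1 + (u * e) ^+ 2.
Proof.
move=> e_neq0; rewrite det_mx22 /covB.
by repeat rewrite ?mxE ?big_ord_recl ?big_ord0 /=; field.
Qed.

Lemma mutual_info_evolved_squeezed (u e : R) : e != 0 ->
  mutual_info (evolved_squeezed_cov u e) = 2 * gfun (Num.sqrt (1 + (u * e) ^+ 2)).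
Proof.
move=> e_neq0; set G := evolved_squeezed_cov u e.
have symG : G^T = G by rewrite /G /evolved_squeezed_cov trmx_mul trmxK.
have det_ge0 : 0 <= 1 + (u * e) ^+ 2 by rewrite addr_ge0 ?sqr_ge0.
rewrite /mutual_info gauss_entropy_symplectic_gram; last exact: symplectic_Mt_squeeze.
rewrite subr0 !gauss_entropy_Omega2 ?det_covA_evolved_squeezed
  ?det_covB_evolved_squeezed //.
- by rewrite mulr_natl mulr2n.
- by rewrite /covB trmx_drsub symG.
- by rewrite /covA trmx_ulsub symG.
Qed.

Lemma mutual_info_pair_evolved_squeezed (t e : R) : e != 0 ->
  let G := evolved_squeezed_cov (- (t / 2)) e in
  mutual_info G + mutual_info (Mt t *m G *m (Mt t)^T) =
  4 * gfun (Num.sqrt (1 + (t / 2 * e) ^+ 2)).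
Proof.
move=> e_neq0 /=; rewrite Mt_evolved_squeezed_cov !mutual_info_evolved_squeezed //.
rewrite (_ : t + - (t / 2) = t / 2) ?mulNr ?sqrrN; last by field.
ring.
Qed.

End SqueezedStates.

Section Numerics.
Variable R : realType.

Lemma ln2_le9_10 : ln (2 : R) <= 9 / 10.
Proof.
have two_le : (2 : R) <= expR (9 / 10).
  have -> : (9 / 10 : R) = 9 / 20 + 9 / 20 by field.
  by rewrite expRD; have := expR_ge1Dx (9 / 20 : R); nra.
by rewrite -[X in _ <= X]expRK ler_ln ?posrE ?expR_gt0.
Qed.

Lemma ln_e_half : ln (expR 1 / 2 : R) = 1 - ln 2.
Proof. by rewrite lnM ?posrE ?expR_gt0 ?invr_gt0 // expRK lnV ?posrE. Qed.

Lemma gfun_1D2x_le (x : R) : 0 < x -> gfun (1 + 2 * x) <= x * (1 + x - ln x).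
Proof.
move=> x_gt0; rewrite /gfun.
have -> : (1 + 2 * x + 1) / 2 = 1 + x by field.
have -> : (1 + 2 * x - 1) / 2 = x by field.
have := le_ln1Dx (_ : -1 < x); nra.
Qed.

Lemma gfun_witness_le : 4 * gfun (1 + 2 / 255) <= 2 * ln (expR 1 / 2 : R).
Proof.
have := @gfun_1D2x_le 255^-1.
rewrite invr_gt0 ltr0n lnV ?posrE ?ltr0n // => /(_ isT) g_le.
have ln255_le : ln (255 : R) <= 8 * ln 2.
  rewrite mulr_natl -lnXn ?ltr0n // ler_ln ?posrE ?ltr0n ?exprn_gt0 //.
  by rewrite -natrX ler_nat.
have := ln2_le9_10; rewrite ln_e_half; lra.
Qed.

(* For t > 0 the squeezing is tuned so that t e / 2 = 32/255, i.e. nu = 257/255. *)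
Lemma exists_squeezing_bound (t : R) : exists e : R,
  e != 0 /\ 4 * gfun (Num.sqrt (1 + (t / 2 * e) ^+ 2)) <= 2 * ln (expR 1 / 2).
Proof.
have [-> | t_neq0] := eqVneq t 0.
  exists 1; split; first exact: oner_neq0.
  rewrite !mul0r expr0n addr0 sqrtr1 gfun1 mulr0 ln_e_half.
  by have := ln2_le9_10; lra.
exists (64 / 255 / t); split; first by rewrite mulf_neq0 ?invr_eq0.
rewrite (_ : 1 + _ = (1 + 2 / 255) ^+ 2); last by field.
by rewrite sqrtr_sqr ger0_norm ?gfun_witness_le.
Qed.

End Numerics.

Theorem mainTheorem9 (R : realType) (t : R) : 0 <= t ->
  (ereal_inf [set ((mutual_info G + mutual_info (Mt t *m G *m (Mt t)^T))%:E)%E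
              | G in [set G : 'M[R]_4 | gaussian_cov G]]
   <= (2 * ln (expR 1 / 2))%:E)%E.
Proof.
move=> _; have [e [e_neq0 bound]] := exists_squeezing_bound t.
set G := evolved_squeezed_cov (- (t / 2)) e.
apply: (@le_trans _ _ (mutual_info G + mutual_info (Mt t *m G *m (Mt t)^T))%:E).
  apply: ereal_inf_lbound; exists G => //.
  exact/gaussian_cov_symplectic_gram/symplectic_Mt_squeeze.
by rewrite lee_fin mutual_info_pair_evolved_squeezed.
Qed.
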